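(* Let $n\ge 2$, $A\in\mathbb{R}^{n\times n}$ and $C\in\mathbb{R}^{1\times n}$, with $(A,C)$ an observable pair and all eigenvalues of $A$ nonzero. Suppose the eigenvalues $\lambda_1,\ldots,\lambda_n$ of $A$ are pairwise distinct and satisfy $\lambda_1^n=\lambda_2^n=\cdots=\lambda_n^n$. Then, for a finite set $S$ of nonnegative integers, the matrix with rows $CA^{s}$, $s\in S$, has rank $n$ if and only if $S$ contains a subset of the form $$\{t,\ t+r_1n+1,\ t+r_2n+2,\ \ldots,\ t+r_{n-1}n+n-1\}$$ for some $t,r_1,\ldots,r_{n-1}\in\{0,1,2,\ldots\}$.
   Context: Setting: discrete-time single-output system $x(t+1)=Ax(t)+Bu(t)$, $y(t)=Cx(t)+Du(t)$ whose output is measured at the time instances in $S$ (a sampling scheme); the matrix with rows $CA^{s}$, $s\in S$, is the sample-based observability matrix, and rank $n$ means sample-based observability. $(A,C)$ observable means the matrix with rows $C,CA,\ldots,CA^{n-1}$ has rank $n$. *)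

From mathcomp Require Import all_boot all_order all_algebra.
From mathcomp Require Import complex.
Set Implicit Arguments. Unset Strict Implicit. Unset Printing Implicit Defensive.
Import Order.TTheory GRing.Theory Num.Theory.
Local Open Scope ring_scope.

(* Real matrices are taken over an arbitrary real closed field R (e.g. the
   reals); their eigenvalues live in the algebraic closure R[i] = complex R. *)

Definition cmx (R : rcfType) (m n : nat) (A : 'M[R]_(m, n)) : 'M[R[i]]_(m, n) :=
  map_mx (real_complex R) A.

Definition obs_mx (R : rcfType) (n : nat) (A : 'M[R]_n) (C : 'rV[R]_n)
  : 'M[R]_(n, n) :=
  \matrix_(i < n, j < n) (C *m A ^+ i) 0 j.

Definition observable (R : rcfType) (n : nat) (A : 'M[R]_n) (C : 'rV[R]_n) :=
  \rank (obs_mx A C) = n.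

Definition sample_obs_mx (R : rcfType) (n : nat) (A : 'M[R]_n) (C : 'rV[R]_n)
  (S : seq nat) : 'M[R]_(size S, n) :=
  \matrix_(i < size S, j < n) (C *m A ^+ (nth 0%N S i)) 0 j.

From mathcomp Require Import all_boot all_order all_algebra.
From mathcomp Require Import complex.
From mathcomp Require Import zify.
Import Order.TTheory GRing.Theory Num.Theory.
Local Open Scope ring_scope.

(* The eigenvalues of A are n distinct roots of X^n - c, where c = lambda^n is
   nonzero; so X^n - c is the characteristic polynomial of A and A^n = c by
   Cayley-Hamilton. Hence C A^s = c^(s / n) C A^(s mod n): the rows of the
   sample-based observability matrix are nonzero multiples of rows of the
   observability matrix, namely those indexed by the residues of S mod n, and
   it has full rank iff S meets every residue class mod n. With t = min S,
   an element of the class of t + k can be written t + r_k n + k. *)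

Definition covers_residues (N : nat) (S : seq nat) :=
  forall j : 'I_N, has (fun s => s %% N == j)%N S.

Lemma exists_shift_modn {N : nat} (t : nat) (j : 'I_N) :
  exists2 k, (k < N)%N & ((t + k) %% N)%N = j.
Proof.
have N_gt0 : (0 < N)%N by case: j => j /= /(leq_ltn_trans (leq0n j)).
exists ((j + (N - t %% N)) %% N)%N; first exact: ltn_pmod.
rewrite modnDmr {1}(divn_eq t N) -addnA modnMDl.
have := ltn_pmod t N_gt0; have := ltn_ord j; move: (t %% N)%N => m jN mN.
by rewrite (_ : m + (j + (N - m)) = j + N)%N; [rewrite modnDr modn_small | lia].
Qed.

Lemma mod_shift_decomp (N t s k : nat) :
  (k < N)%N -> (t <= s)%N -> s = t + k %[mod N] ->
  s = (t + (s - t) %/ N * N + k)%N.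
Proof.
move=> kN ts sk; rewrite -addnA -[s in LHS](subnKC ts); congr (_ + _)%N.
rewrite {1}(divn_eq (s - t) N); congr (_ + _)%N.
by rewrite -(modn_small kN); apply/eqP; rewrite -(eqn_modDl t) subnKC // sk.
Qed.

Lemma covers_residuesP (N : nat) (S : seq nat) : (0 < N)%N ->
  covers_residues N S <->
  exists (t : nat) (r : nat -> nat),
    t \in S /\ forall k : nat, (1 <= k <= N.-1)%N -> (t + r k * N + k)%N \in S.
Proof.
move=> N_gt0; split=> [cover | [t [r [tS tkS]]] j].
- have [|t tS t_min] := ex_minnP (P := fun s => s \in S).
    by have /hasP[s sS _] := cover (Ordinal N_gt0); exists s.
  pose s k := nth 0%N S (find (fun s => s %% N == (t + k) %% N)%N S).
  have hasS k : has (fun s => s %% N == (t + k) %% N)%N S.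
    exact: (cover (Ordinal (ltn_pmod (t + k) N_gt0))).
  exists t, (fun k => (s k - t) %/ N)%N; split=> // k /andP[_ kN].
  have skS : s k \in S by rewrite mem_nth // -has_find.
  rewrite -mod_shift_decomp ?t_min //; first by rewrite -ltnS prednK in kN.
  by apply/eqP; apply: (nth_find 0%N (hasS k)).
- have [k kN tkj] := exists_shift_modn t j.
  have [k0 | k_neq0] := eqVneq k 0%N.
    by apply/hasP; exists t; rewrite // -tkj k0 addn0.
  apply/hasP; exists (t + r k * N + k)%N.
    by apply: tkS; rewrite lt0n k_neq0 -ltnS prednK.
  by rewrite addnAC addnC modnMDl tkj.
Qed.

Definition rows_at {F : fieldType} {m : nat} (v : nat -> 'rV[F]_m) (S : seq nat)
  : 'M[F]_(size S, m) :=
  \matrix_(i < size S) v (nth 0%N S i).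

Section QuasiPeriodicRows.

Context {F : fieldType} {m N : nat} {c : F} {v : nat -> 'rV[F]_m}.
Hypothesis N_gt0 : (0 < N)%N.
Hypothesis vE : forall s, v s = c ^+ (s %/ N) *: v (s %% N)%N.

Lemma rows_at_factor (S : seq nat) :
  rows_at v S =
  \matrix_(i < size S, k < N)
     (if k == (nth 0%N S i %% N)%N :> nat then c ^+ (nth 0%N S i %/ N) else 0)
  *m \matrix_(j < N) v j.
Proof.
apply/matrixP => i k; rewrite !mxE.
rewrite (bigD1 (Ordinal (ltn_pmod (nth 0%N S i) N_gt0))) //= big1 => [|j j_neq].
  by rewrite !mxE eqxx vE mxE addr0.
by rewrite !mxE ifN ?mul0r.
Qed.

Lemma rank_rows_at_covers (S : seq nat) :
  \rank (rows_at v S) = N -> covers_residues N S.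
Proof.
move=> rankS j; apply/negPn/negP => /hasPn uncovered.
move: (rows_at_factor S); set P := \matrix_(i, k) _ => factorS.
have /row_fullP[Q QP] : row_full P.
  by rewrite /row_full eqn_leq rank_leq_col -{1}rankS factorS mxrankM_maxl.
have /eqP := congr1 (fun M : 'M[F]_N => M j j) QP.
rewrite !mxE eqxx big1 1?eq_sym ?oner_eq0 // => i _; rewrite !mxE.
case: eqP => [j_res | _]; last by rewrite mulr0.
by have := uncovered _ (mem_nth 0%N (ltn_ord i)); rewrite -j_res eqxx.
Qed.

Hypothesis c_neq0 : c != 0.

Lemma covers_residues_sub_rows_at (S : seq nat) :
  covers_residues N S -> (\matrix_(j < N) v j <= rows_at v S)%MS.
Proof.
move=> cover; apply/row_subP => j; rewrite rowK.
have /hasP[_ /(nthP 0%N)[i iS <-] /eqP <-] := cover j.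
set s := nth 0%N S i.
have -> : v (s %% N)%N = (c ^+ (s %/ N))^-1 *: row (Ordinal iS) (rows_at v S).
  by rewrite rowK /= [v s]vE scalerA mulVf ?expf_neq0 ?scale1r.
by rewrite scalemx_sub ?row_sub.
Qed.

Lemma rank_rows_atP (S : seq nat) :
  \rank (\matrix_(j < N) v j) = N ->
  \rank (rows_at v S) = N <-> covers_residues N S.
Proof.
move=> rank_base; split; first exact: rank_rows_at_covers.
move=> /covers_residues_sub_rows_at/mxrankS; rewrite rank_base => le_N.
apply/eqP; rewrite eqn_leq le_N rows_at_factor andbT.
exact: leq_trans (mxrankM_maxl _ _) (rank_leq_col _).
Qed.

End QuasiPeriodicRows.

Lemma monic_eq_roots {R : idomainType} {p q : {poly R}} (rs : seq R) :
  p \is monic -> q \is monic -> size p = (size rs).+1 -> size q = (size rs).+1 ->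
  uniq rs -> all (root p) rs -> all (root q) rs -> p = q.
Proof.
move=> p_monic q_monic size_p size_q rs_uniq p_rs q_rs.
apply/eqP; rewrite -subr_eq0.
apply/eqP/(roots_geq_poly_eq0 (rs := rs)) => //.
  apply/allP => x x_rs; rewrite rootE !hornerE.
  by rewrite (rootP (allP p_rs x x_rs)) (rootP (allP q_rs x x_rs)) subrr.
apply/leq_sizeP => j; rewrite leq_eqVlt coefB => /predU1P[<- | lt_j].
  move: (monicP p_monic) (monicP q_monic).
  by rewrite /lead_coef size_p size_q => -> ->; rewrite subrr.
by rewrite !nth_default ?subrr ?size_p ?size_q.
Qed.

Lemma char_poly_eq_XnsubC {F : fieldType} {n : nat} {B : 'M[F]_n.+1}
    {lambda : 'I_n.+1 -> F} {c : F} :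
  injective lambda -> (forall k, eigenvalue B (lambda k)) ->
  (forall k, lambda k ^+ n.+1 = c) ->
  char_poly B = 'X ^+ n.+1 - c%:P.
Proof.
move=> lambda_inj eig lambda_c.
apply: (monic_eq_roots (map lambda (enum 'I_n.+1))).
- exact: char_poly_monic.
- exact: monicXnsubC.
- by rewrite size_char_poly size_map size_enum_ord.
- by rewrite size_XnsubC // size_map size_enum_ord.
- by rewrite map_inj_uniq ?enum_uniq.
- by apply/allP => _ /mapP[k _ ->]; rewrite -eigenvalue_root_char.
- by apply/allP => _ /mapP[k _ ->]; rewrite rootE !hornerE lambda_c subrr.
Qed.

Lemma char_poly_XnsubC_exp (R : comNzRingType) (n : nat) (B : 'M[R]_n.+1)
    (c : R) :
  char_poly B = 'X ^+ n.+1 - c%:P -> B ^+ n.+1 = c%:M.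
Proof.
move=> charB; apply/eqP; rewrite -subr_eq0; apply/eqP.
by rewrite -(Cayley_Hamilton B) charB rmorphB rmorphXn /= horner_mx_X horner_mx_C.
Qed.

Lemma mulmx_exp_divn (R : comNzRingType) (m n N : nat) (D : 'M[R]_(m, n))
    (B : 'M[R]_n) (c : R) :
  B ^+ N = c%:M ->
  forall s, D *m B ^+ s = c ^+ (s %/ N) *: (D *m B ^+ (s %% N)%N).
Proof.
move=> BN s; rewrite {1}(divn_eq s N) exprD mulnC exprM BN -rmorphXn /=.
by rewrite -mulmxE mulmxA mul_mx_scalar scalemxAl.
Qed.

Theorem lemma4 (R : rcfType) (n : nat) (A : 'M[R]_n) (C : 'rV[R]_n)
  (lambda : 'I_n -> R[i]) :
  (2 <= n)%N ->
  observable A C ->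
  (forall a : R[i], eigenvalue (cmx A) a -> a != 0) ->
  (forall k, eigenvalue (cmx A) (lambda k)) ->
  injective lambda ->
  (forall k l, lambda k ^+ n = lambda l ^+ n) ->
  forall S : seq nat,
    \rank (sample_obs_mx A C S) = n <->
    exists (t : nat) (r : nat -> nat),
      t \in S /\ forall k : nat, (1 <= k <= n.-1)%N -> (t + r k * n + k)%N \in S.
Proof.
case: n A C lambda => [//|n] A C lambda _ obs eig_neq0 eig lambda_inj lambda_pow.
move=> S.
pose c := lambda ord0 ^+ n.+1.
have c_neq0 : c != 0 by rewrite expf_neq0 ?eig_neq0.
pose v s := cmx (C *m A ^+ s).
have vE s : v s = c ^+ (s %/ n.+1) *: v (s %% n.+1)%N.
  rewrite /v /cmx !map_mxM !rmorphXn.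
  apply/mulmx_exp_divn/char_poly_XnsubC_exp/(char_poly_eq_XnsubC lambda_inj eig).
  by move=> k; rewrite (lambda_pow k ord0).
have rank_base : \rank (\matrix_(j < n.+1) v j) = n.+1.
  rewrite -[RHS]obs -(mxrank_map (real_complex R)).
  by congr (\rank _); apply/matrixP => i j; rewrite !mxE.
rewrite -(mxrank_map (real_complex R)) (_ : map_mx _ _ = rows_at v S).
  by rewrite (rank_rows_atP (ltn0Sn n) vE c_neq0 S rank_base) covers_residuesP.
by apply/matrixP => i j; rewrite !mxE.
Qed.
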